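(* Let $\Gamma$ be a finite simple graph and let $K_n$ be the complete graph on $n$ vertices. If $\psi\colon A(K_n)\to A(\Gamma)$ is an injective homomorphism satisfying condition (KK), then there is a full embedding $\iota\colon K_n\to\Gamma$ with $\iota(V(K_n))\subset\mathrm{supp}(\psi)$.
   Context: $A(\Gamma) = \langle V(\Gamma) \mid uv=vu \text{ whenever } \{u,v\}\in E(\Gamma)\rangle$ is the right-angled Artin group; $A(K_n)\cong\mathbb{Z}^n$. A graph embedding is an injective vertex map preserving adjacency; it is full if it also preserves non-adjacency. The support $\mathrm{supp}(g)$ of $g\in A(\Gamma)$ is the set of vertices $v$ such that $v$ or $v^{-1}$ occurs in a (equivalently, any) shortest word representing $g$. For a homomorphism $\psi\colon A(\Lambda)\to A(\Gamma)$, $\mathrm{supp}(\psi)=\bigcup_{v\in V(\Lambda)}\mathrm{supp}(\psi(v))$. A homomorphism $\psi$ satisfies condition (KK) if for every $v\in V(\Lambda)$ the set $\mathrm{supp}(\psi(v))$ consists of mutually adjacent vertices of $\Gamma$. *)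

(* Right-angled Artin groups are modelled by words over
   signed generators together with the congruence generated by the
   defining relations (free reduction and commutation of adjacent letters). *)
From mathcomp Require Import all_boot.
From Stdlib Require Import Relations.Relation_Operators.
Set Implicit Arguments. Unset Strict Implicit. Unset Printing Implicit Defensive.

Section RAAG.
Variables (T : eqType) (e : rel T).

(* a letter (v, false) stands for v, (v, true) for v^-1 *)
Definition word := seq (T * bool).

Definition inv_word (w : word) : word := rev (map (fun p => (p.1, ~~ p.2)) w).

Inductive raag_step : word -> word -> Prop :=
| step_cancel a c x b :
    raag_step (a ++ [:: (x, b); (x, ~~ b)] ++ c) (a ++ c)
| step_comm a c x bx y b_y :
    e x y -> raag_step (a ++ [:: (x, bx); (y, b_y)] ++ c)
                       (a ++ [:: (y, b_y); (x, bx)] ++ c).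

Definition raag_eq : word -> word -> Prop := clos_refl_sym_trans word raag_step.

Definition shortest (w : word) : Prop :=
  forall w', raag_eq w w' -> size w <= size w'.

Definition in_supp (w : word) (v : T) : Prop :=
  exists w', raag_eq w w' /\ shortest w' /\ v \in map fst w'.
End RAAG.

Definition Kn_rel (n : nat) : rel 'I_n := fun i j => i != j.

(* A homomorphism A(Lambda) -> A(Gamma) is given by the images f v of the
   generators; it is extended to words. *)
Definition hom_word (S T : eqType) (f : S -> word T) (w : word S) : word T :=
  flatten (map (fun p => if p.2 then inv_word (f p.1) else f p.1) w).

Definition is_raag_hom (S T : eqType) (eL : rel S) (eG : rel T)
  (f : S -> word T) : Prop :=
  forall x y, eL x y -> raag_eq eG (f x ++ f y) (f y ++ f x).

Definition raag_hom_injective (S T : eqType) (eL : rel S) (eG : rel T)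
  (f : S -> word T) : Prop :=
  forall w1 w2, raag_eq eG (hom_word f w1) (hom_word f w2) -> raag_eq eL w1 w2.

Definition in_supp_hom (S T : eqType) (eG : rel T) (f : S -> word T) (v : T) :=
  exists x, in_supp eG (f x) v.

Definition cond_KK (S T : eqType) (eG : rel T) (f : S -> word T) : Prop :=
  forall x u v, in_supp eG (f x) u -> in_supp eG (f x) v -> u != v -> eG u v.

Definition full_embedding (S T : eqType) (eL : rel S) (eG : rel T)
  (iota : S -> T) : Prop :=
  injective iota /\ forall x y, eG (iota x) (iota y) = eL x y.

From mathcomp Require Import all_boot all_algebra ring zify.
From Stdlib Require Import Relations.Relation_Operators Classical.
Set Implicit Arguments. Unset Strict Implicit. Unset Printing Implicit Defensive.
Import GRing.Theory Num.Theory.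

(* Replace each [psi(x)] by a shortest representative [g x]. By (KK) the
   letters of [g x] pairwise commute, so [g x] is as short as its normal form
   in the free abelian group on them and every letter of [g x] has nonzero
   exponent sum. If [u] occurs in [g x] and [v] in [g y], with [u], [v]
   distinct and non-adjacent, then [v] does not occur in [g x] nor [u] in
   [g y]; in the representation sending [u] and [v] to two non-commuting
   unipotent matrices of SL(2,Z), the commuting elements [g x] and [g y] then
   force one of these exponent sums to vanish. Hence all the letters form a
   clique [C], [psi] embeds [Z^n] into [Z^|C|], so [n <= |C|], and any [n]
   vertices of [C] span a full copy of [K_n]. *)

Section Congruence.
Variables (T : eqType) (e : rel T).
Notation req := (raag_eq e).

Lemma req_refl w : req w w. Proof. exact: rst_refl. Qed.
Lemma req_sym w1 w2 : req w1 w2 -> req w2 w1. Proof. exact: rst_sym. Qed.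
Lemma req_trans w1 w2 w3 : req w1 w2 -> req w2 w3 -> req w1 w3.
Proof. exact: rst_trans. Qed.

Lemma raag_step_catl p w1 w2 : raag_step e w1 w2 -> raag_step e (p ++ w1) (p ++ w2).
Proof.
case=> [a c x b|a c x bx y b_y exy].
  by move: (step_cancel e (p ++ a) c x b); rewrite -!catA.
by move: (step_comm (p ++ a) c bx b_y exy); rewrite -!catA.
Qed.

Lemma raag_step_catr p w1 w2 : raag_step e w1 w2 -> raag_step e (w1 ++ p) (w2 ++ p).
Proof.
case=> [a c x b|a c x bx y b_y exy].
  by move: (step_cancel e a (c ++ p) x b); rewrite -!catA.
by move: (step_comm a (c ++ p) bx b_y exy); rewrite -!catA.
Qed.

Lemma req_catl p w1 w2 : req w1 w2 -> req (p ++ w1) (p ++ w2).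
Proof.
elim=> [x y h|x|x y _|x y z _ h1 _ h2].
- exact: rst_step (raag_step_catl p h).
- exact: req_refl.
- exact: req_sym.
- exact: req_trans h1 h2.
Qed.

Lemma req_catr p w1 w2 : req w1 w2 -> req (w1 ++ p) (w2 ++ p).
Proof.
elim=> [x y h|x|x y _|x y z _ h1 _ h2].
- exact: rst_step (raag_step_catr p h).
- exact: req_refl.
- exact: req_sym.
- exact: req_trans h1 h2.
Qed.

Lemma req_cat a a' b b' : req a a' -> req b b' -> req (a ++ b) (a' ++ b').
Proof. by move=> /(req_catr b) ha /(req_catl a'); apply: req_trans. Qed.

Lemma exists_shortest w : exists w', req w w' /\ shortest e w'.
Proof.
have [k] := ubnP (size w); elim: k w => // k IH w le_w_k.
have [sw|not_sw] := classic (shortest e w).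
  by exists w; split=> //; apply: req_refl.
have [w1 [ww1 lt_w1_w]] : exists w1, req w w1 /\ size w1 < size w.
  apply: NNPP => none; apply: not_sw => w1 ww1; rewrite leqNgt; apply/negP => lt_w1_w.
  by apply: none; exists w1.
have [w2 [w1w2 sw2]] := IH w1 (leq_trans lt_w1_w le_w_k).
by exists w2; split=> //; apply: req_trans w1w2.
Qed.

Local Open Scope ring_scope.

Definition letter_sign (b : bool) : int := if b then -1 else 1.

Fixpoint expsum (w : word T) (v : T) : int :=
  if w is l :: w' then (if l.1 == v then letter_sign l.2 else 0) + expsum w' v
  else 0.

Lemma expsum_cat w1 w2 v : expsum (w1 ++ w2) v = expsum w1 v + expsum w2 v.
Proof. by elim: w1 => [|l w IH] /=; rewrite ?add0r // IH addrA. Qed.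

Lemma expsum_req w1 w2 v : req w1 w2 -> expsum w1 v = expsum w2 v.
Proof.
elim=> // [_ _ [a c x b|a c x bx y b_y _]|x y z _ -> _ ->] //; rewrite !expsum_cat /=.
  by case: (x == v); case: b; rewrite /= ?addr0 ?add0r // addrA ?addNr ?subrr add0r.
by rewrite !addr0 (addrC (if x == v then _ else _)).
Qed.

End Congruence.

Section CliqueWords.
Variables (T : eqType) (e : rel T).
Notation req := (raag_eq e).
Local Open Scope ring_scope.

Definition clique (C : seq T) := {in C &, forall u v, u != v -> e u v}.

Definition gen_power (x : T) (k : int) : word T := nseq `|k|%N (x, k < 0).

Lemma req_cons_gen_power x b k :
  req ((x, b) :: gen_power x k) (gen_power x (k + letter_sign b)).
Proof.
case: b; [case: k => [[|m]|m] | case: k => [m|[|m]]]; rewrite /letter_sign.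
- exact: req_refl.
- rewrite (_ : Posz m.+1 + -1 = Posz m); last by lia.
  exact: rst_step (step_cancel e [::] (nseq m (x, false)) x true).
- rewrite (_ : Negz m + -1 = Negz m.+1); last by lia.
  exact: req_refl.
- rewrite (_ : Posz m + 1 = Posz m.+1); last by lia.
  exact: req_refl.
- exact: rst_step (step_cancel e [::] [::] x false).
- rewrite (_ : Negz m.+1 + 1 = Negz m); last by lia.
  exact: rst_step (step_cancel e [::] (nseq m.+1 (x, true)) x false).
Qed.

Lemma req_commute_letter_word x b u : all (fun l => e x l.1) u ->
  req ((x, b) :: u) (u ++ [:: (x, b)]).
Proof.
elim: u => [|[y b_y] u IH] /=; first by move=> _; apply: req_refl.
case/andP=> exy /IH IHu.
apply: (req_trans (w2 := [:: (y, b_y), (x, b) & u])).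
  exact: rst_step (step_comm [::] u b b_y exy).
exact: (req_catl [:: (y, b_y)] IHu).
Qed.

(* Normal form of the element of the free abelian group on a clique [C]
   with exponent [g c] on [c]. *)
Definition clique_word (C : seq T) (g : T -> int) : word T :=
  flatten [seq gen_power c (g c) | c <- C].

Lemma eq_clique_word C g1 g2 : {in C, g1 =1 g2} -> clique_word C g1 = clique_word C g2.
Proof. by move=> eq_g; congr flatten; apply/eq_in_map => c /eq_g ->. Qed.

Lemma size_clique_word C g : size (clique_word C g) = (\sum_(c <- C) `|g c|)%N.
Proof.
by elim: C => [|c C IH]; rewrite ?big_nil ?big_cons //= size_cat size_nseq IH.
Qed.

Lemma req_cons_clique_word C g x b : uniq C -> clique C -> x \in C ->
  req ((x, b) :: clique_word C g)
      (clique_word C (fun v => (if x == v then letter_sign b else 0) + g v)).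
Proof.
elim: C => [|c C IH] //= /andP[cC uC] clC.
have clC' : clique C by move=> u v uC' vC'; apply: clC; rewrite inE ?uC' ?vC' orbT.
rewrite inE /clique_word /= -/(clique_word C _) -/(clique_word C _).
have [xc _|xc /= xC] := eqVneq x c.
  subst c; rewrite addrC (@eq_clique_word C _ g).
    exact: req_catr (req_cons_gen_power _ _ _).
  by move=> v vC; case: eqP => [xv|]; rewrite ?add0r //; move: cC; rewrite xv vC.
rewrite add0r -cat1s catA; apply: req_trans (req_catl _ (IH uC clC' xC)).
rewrite -[_ :: clique_word C g]cat1s catA; apply: req_catr.
apply: req_commute_letter_word; apply/allP => l /nseqP [-> _] /=.
by apply: clC; rewrite ?inE ?eqxx ?xC ?orbT.
Qed.

Lemma req_clique_word C w : uniq C -> clique C -> all (fun l => l.1 \in C) w ->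
  req w (clique_word C (expsum w)).
Proof.
move=> uC clC; elim: w => [|[x b] w IH] /=.
  by move=> _; elim: C {uC clC} => //; apply: req_refl.
case/andP=> xC /IH IHw; apply: req_trans (req_cons_clique_word _ _ uC clC xC).
exact: (req_catl [:: (x, b)] IHw).
Qed.

Lemma req_expsum_clique C w1 w2 : uniq C -> clique C ->
  all (fun l => l.1 \in C) w1 -> all (fun l => l.1 \in C) w2 ->
  {in C, expsum w1 =1 expsum w2} -> req w1 w2.
Proof.
move=> uC clC w1C w2C eq_w12; apply: req_trans (req_clique_word uC clC w1C) _.
rewrite (eq_clique_word eq_w12); exact/req_sym/req_clique_word.
Qed.

Lemma abs_expsum_le_count w c : (`|expsum w c| <= count (fun l : T * bool => l.1 == c) w)%N.
Proof.
by elim: w => [|[x b] w IH] //=; case: (x == c); case: b; rewrite /letter_sign /=; lia.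
Qed.

Lemma size_sum_count C w : uniq C -> all (fun l => l.1 \in C) w ->
  size w = (\sum_(c <- C) count (fun l : T * bool => l.1 == c) w)%N.
Proof.
move=> uC; elim: w => [|l w IH] /=; first by rewrite big1.
case/andP=> lC /IH ->; rewrite big_split /=.
suff -> : (\sum_(c <- C) (l.1 == c) = 1)%N by [].
rewrite (bigD1_seq l.1) //= eqxx big1 // => c.
by rewrite eq_sym => /negbTE ->.
Qed.

(* A shortest word over a clique is as short as its normal form, so every
   letter occurring in it has nonzero exponent sum. *)
Lemma shortest_expsum_neq0 w v : clique (map fst w) -> shortest e w ->
  v \in map fst w -> expsum w v != 0.
Proof.
move=> clw sw /mapP [l lw ->]; apply/negP => /eqP expsum0.
set C := undup (map fst w).
have uC : uniq C := undup_uniq _.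
have clC : clique C by move=> x y; rewrite !mem_undup; apply: clw.
have wC : all (fun l => l.1 \in C) w.
  by apply/allP => l' l'w; rewrite mem_undup; apply: map_f.
have lC : l.1 \in C by move/allP: wC => /(_ l lw).
have count_pos : (0 < count (fun l' => l'.1 == l.1) w)%N.
  by rewrite -has_count; apply/hasP; exists l.
have := sw _ (req_clique_word uC clC wC).
rewrite size_clique_word (size_sum_count uC wC) !(bigD1_seq l.1) //= expsum0.
apply/negP; rewrite -ltnNge; apply: (leq_add count_pos).
by apply: leq_sum => c _; apply: abs_expsum_le_count.
Qed.

End CliqueWords.

Section NonAdjacentRepresentation.
Variables (T : eqType) (e : rel T).
Hypotheses (e_sym : symmetric e) (e_irr : irreflexive e).
Variables (a b : T).
Hypothesis nab : ~~ e a b.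
Notation req := (raag_eq e).
Local Open Scope ring_scope.

Definition mx2 (p q r s : int) : 'M[int]_2 :=
  \matrix_(i, j) if i == 0 then (if j == 0 then p else q) else (if j == 0 then r else s).

Lemma mul_mx2 p q r s p' q' r' s' :
  mx2 p q r s *m mx2 p' q' r' s' =
  mx2 (p * p' + q * r') (p * q' + q * s') (r * p' + s * r') (r * q' + s * s').
Proof.
apply/matrixP => i j; rewrite !mxE !big_ord_recr big_ord0 !mxE /= add0r.
by case: i => [[|[|i]] ?]; case: j => [[|[|j]] ?].
Qed.

Lemma mx2_1 : mx2 1 0 0 1 = 1%:M.
Proof.
by apply/matrixP => i j; rewrite !mxE; case: i => [[|[|i]] ?]; case: j => [[|[|j]] ?].
Qed.

(* The representation [a |-> (1 1; 0 1)], [b |-> (1 0; 1 1)] of A(Gamma),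
   all other generators acting trivially; it is well defined because [a] and
   [b] are not adjacent. *)
Definition letter_mx (l : T * bool) : 'M[int]_2 :=
  if l.1 == a then mx2 1 (letter_sign l.2) 0 1
  else if l.1 == b then mx2 1 0 (letter_sign l.2) 1 else 1%:M.

Definition word_mx (w : word T) : 'M[int]_2 := foldr (fun l m => letter_mx l *m m) 1%:M w.

Lemma word_mx_cat w1 w2 : word_mx (w1 ++ w2) = word_mx w1 *m word_mx w2.
Proof. by elim: w1 => [|l w IH] /=; rewrite ?mul1mx // IH mulmxA. Qed.

Lemma letter_mxK x bx : letter_mx (x, bx) *m letter_mx (x, ~~ bx) = 1%:M.
Proof.
rewrite /letter_mx /=; case: ifP => _; last case: ifP => _; rewrite ?mul1mx //;
  by rewrite mul_mx2 -mx2_1; case: bx; congr mx2; rewrite /letter_sign; ring.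
Qed.

Lemma letter_mx_out x bx : x != a -> x != b -> letter_mx (x, bx) = 1%:M.
Proof. by rewrite /letter_mx => /negbTE -> /negbTE ->. Qed.

Lemma letter_mx_comm x bx y b_y : e x y ->
  letter_mx (x, bx) *m letter_mx (y, b_y) = letter_mx (y, b_y) *m letter_mx (x, bx).
Proof.
move=> exy.
have [/andP[xa xb]|x_ab] := boolP ((x != a) && (x != b)).
  by rewrite letter_mx_out // mul1mx mulmx1.
have [/andP[ya yb]|y_ab] := boolP ((y != a) && (y != b)).
  by rewrite [letter_mx (y, _)]letter_mx_out // mul1mx mulmx1.
move: x_ab y_ab exy; rewrite !negb_and !negbK.
by do 2![case/orP=> /eqP->]; rewrite ?e_irr // ?(negbTE nab) // e_sym (negbTE nab).
Qed.

Lemma word_mx_req w1 w2 : req w1 w2 -> word_mx w1 = word_mx w2.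
Proof.
elim=> // [_ _ [p c x bx|p c x bx y b_y exy]|x y z _ -> _ ->] //;
  rewrite !word_mx_cat /= !mulmx1 mulmxA.
  by rewrite letter_mxK mulmx1.
by rewrite letter_mx_comm // [RHS]mulmxA.
Qed.

Lemma word_mx_notin_b w : b \notin map fst w -> word_mx w = mx2 1 (expsum w a) 0 1.
Proof.
elim: w => [|[x bx] w IH] /=; first by rewrite mx2_1.
rewrite inE negb_or => /andP[bx_neq /IH ->]; rewrite /letter_mx /=.
case: eqP => [_|_]; last by rewrite eq_sym (negbTE bx_neq) mul1mx add0r.
by rewrite mul_mx2; congr mx2; ring.
Qed.

Lemma word_mx_notin_a w : a \notin map fst w -> word_mx w = mx2 1 0 (expsum w b) 1.
Proof.
elim: w => [|[x bx] w IH] /=; first by rewrite mx2_1.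
rewrite inE negb_or => /andP[ax_neq /IH ->]; rewrite /letter_mx /= eq_sym (negbTE ax_neq).
case: eqP => [_|_]; last by rewrite mul1mx add0r.
by rewrite mul_mx2; congr mx2; ring.
Qed.

(* The (0,0) entries of the two products are [1 + k l] and [1]. *)
Lemma commute_expsum_mul_eq0 w1 w2 :
  b \notin map fst w1 -> a \notin map fst w2 -> req (w1 ++ w2) (w2 ++ w1) ->
  expsum w1 a * expsum w2 b = 0.
Proof.
move=> w1b w2a /word_mx_req; rewrite !word_mx_cat word_mx_notin_b // word_mx_notin_a //.
rewrite !mul_mx2 => /matrixP /(_ 0 0); rewrite !mxE /=; lia.
Qed.

End NonAdjacentRepresentation.

Section CommutingShortestWords.
Variables (T : eqType) (e : rel T).
Hypotheses (e_sym : symmetric e) (e_irr : irreflexive e).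
Local Open Scope ring_scope.

Lemma commuting_shortest_adjacent w1 w2 u v :
  shortest e w1 -> shortest e w2 ->
  clique e (map fst w1) -> clique e (map fst w2) ->
  raag_eq e (w1 ++ w2) (w2 ++ w1) ->
  u \in map fst w1 -> v \in map fst w2 -> u != v -> e u v.
Proof.
move=> s1 s2 cl1 cl2 comm u1 v2 uv; apply/negPn/negP => nuv.
have v1 : v \notin map fst w1.
  by apply/negP => v1; rewrite (cl1 _ _ u1 v1 uv) in nuv.
have u2 : u \notin map fst w2.
  by apply/negP => u2; rewrite (cl2 _ _ u2 v2 uv) in nuv.
have /eqP := commute_expsum_mul_eq0 e_sym e_irr nuv v1 u2 comm.
by apply/negP; rewrite mulf_neq0 // (shortest_expsum_neq0 cl1, shortest_expsum_neq0 cl2).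
Qed.

End CommutingShortestWords.

Section IntegerKernel.
Local Open Scope ring_scope.

Lemma int_mx_map_eq0 m n (A : 'M[int]_(m, n)) : map_mx (intr : int -> rat) A = 0 -> A = 0.
Proof.
move/matrixP=> A0; apply/matrixP => i j.
by have /eqP := A0 i j; rewrite !mxE intr_eq0 => /eqP.
Qed.

(* Clearing the denominators of a nonzero rational kernel vector. *)
Lemma int_mx_kernel_neq0 n m (A : 'M[int]_(n, m)) : (m < n)%N ->
  exists2 c : 'rV[int]_n, c != 0 & c *m A = 0.
Proof.
move=> lt_mn; set Aq := map_mx (intr : int -> rat) A.
have /rowV0Pn [r /sub_kermxP rAq r_neq0] : kermx Aq != 0.
  by rewrite -mxrank_eq0 mxrank_ker subn_eq0 -ltnNge (leq_ltn_trans (rank_leq_col Aq)).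
pose D : int := \prod_i denq (r 0 i).
pose c := \row_i (numq (r 0 i) * \prod_(j | j != i) denq (r 0 j)).
have cE : map_mx intr c = D%:~R *: r.
  apply/rowP => i; rewrite !mxE /D (bigD1 i (P := predT)) //=.
  by rewrite !intrM numqE; ring.
have D_neq0 : D%:~R != 0 :> rat.
  by rewrite intr_eq0; apply/prodf_neq0 => i _; rewrite denq_neq0.
exists c.
  apply: contraNneq r_neq0 => c0.
  by have := scaler_eq0 D%:~R r; rewrite -cE c0 map_mx0 eqxx (negbTE D_neq0).
by apply: int_mx_map_eq0; rewrite map_mxM cE -scalemxAl rAq scaler0.
Qed.

End IntegerKernel.

Section WordPowers.
Variable S : eqType.
Local Open Scope ring_scope.

Definition pow_word (w : word S) (k : nat) : word S := flatten (nseq k w).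

Lemma expsum_flatten (ws : seq (word S)) v :
  expsum (flatten ws) v = \sum_(w <- ws) expsum w v.
Proof. by elim: ws => [|w ws IH]; rewrite ?big_nil ?big_cons //= expsum_cat IH. Qed.

Lemma expsum_pow_word (w : word S) k v :
  expsum (pow_word w k) v = k%:Z * expsum w v.
Proof.
rewrite expsum_flatten big_nseq; elim: k => [|k IH] /=; first by rewrite mul0r.
by rewrite IH -add1n PoszD mulrDl mul1r.
Qed.

Lemma req_pow_word (e : rel S) w1 w2 k :
  raag_eq e w1 w2 -> raag_eq e (pow_word w1 k) (pow_word w2 k).
Proof. by move=> w12; elim: k => [|k IH] /=; [apply: req_refl | apply: req_cat]. Qed.

End WordPowers.

Lemma hom_word_cat (S T : eqType) (h : S -> word T) w1 w2 :
  hom_word h (w1 ++ w2) = hom_word h w1 ++ hom_word h w2.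
Proof. by rewrite /hom_word map_cat flatten_cat. Qed.

Lemma hom_word_gen_power (S T : eqType) (h : S -> word T) x k :
  hom_word h (nseq k (x, false)) = pow_word (h x) k.
Proof. by elim: k => //= k IH; rewrite /hom_word /= -/(hom_word h _) IH. Qed.

Section InjectiveFromKn.
Variables (T : eqType) (e : rel T) (n : nat) (f g : 'I_n -> word T).
Hypothesis f_g : forall i, raag_eq e (f i) (g i).
Local Open Scope ring_scope.

Definition gens_word (k : 'I_n -> nat) : word 'I_n :=
  flatten [seq nseq (k i) (i, false) | i <- enum 'I_n].

Definition image_word (k : 'I_n -> nat) : word T :=
  flatten [seq pow_word (g i) (k i) | i <- enum 'I_n].

Lemma expsum_gens_word k j : expsum (gens_word k) j = (k j)%:Z.
Proof.
rewrite expsum_flatten big_map big_enum_cond /= (bigD1 j) //= big1 ?addr0.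
  by elim: (k j) => //= m ->; rewrite eqxx -add1n PoszD.
by move=> i ij; elim: (k i) => //= m ->; rewrite (negbTE ij) add0r.
Qed.

Lemma expsum_image_word k v :
  expsum (image_word k) v = \sum_i (k i)%:Z * expsum (g i) v.
Proof.
rewrite expsum_flatten big_map big_enum_cond.
by apply: eq_bigr => i _; apply: expsum_pow_word.
Qed.

Lemma req_hom_gens_word k : raag_eq e (hom_word f (gens_word k)) (image_word k).
Proof.
rewrite /gens_word /image_word; elim: (enum 'I_n) => [|i s IH] /=; first exact: req_refl.
rewrite hom_word_cat hom_word_gen_power; exact: req_cat (req_pow_word _ (f_g i)) IH.
Qed.

Lemma all_image_word (P : pred (T * bool)) k :
  (forall i, all P (g i)) -> all P (image_word k).
Proof.
move=> gP; apply/allP => l /flattenP [_ /mapP [i _ ->] /flattenP [_ /nseqP [-> _]]].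
exact: (allP (gP i)).
Qed.

(* Otherwise the exponent-sum vectors of the [g i] on [C] satisfy a
   nontrivial integer relation [c]; the positive and negative parts of [c]
   give two distinct elements of [A(K_n)] with the same image. *)
Lemma raag_hom_injective_Kn_size_le C : uniq C -> clique e C ->
  (forall i, all (fun l => l.1 \in C) (g i)) ->
  raag_hom_injective (@Kn_rel n) e f -> (n <= size C)%N.
Proof.
move=> uC clC gC f_inj; rewrite leqNgt; apply/negP => lt_C_n.
pose A : 'M[int]_(n, size C) := \matrix_(i, j) expsum (g i) (tnth (in_tuple C) j).
have [c c_neq0 cA0] := int_mx_kernel_neq0 A lt_C_n.
have /fin_all_exists [k kE] : forall i, exists pm : nat * nat, c 0 i = pm.1%:Z - pm.2%:Z.
  move=> i; case: (c 0 i) => [p|m].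
    by exists (p, 0%N); rewrite subr0.
  by exists (0%N, m.+1); rewrite sub0r.
have image_eq : raag_eq e (image_word (fun i => (k i).1)) (image_word (fun i => (k i).2)).
  apply: req_expsum_clique uC clC (all_image_word _ gC) (all_image_word _ gC) _ => v vC.
  have [j ->] : exists j, v = tnth (in_tuple C) j by apply/tnthP.
  have := congr1 (fun M : 'rV[int]_(size C) => M 0 j) cA0; rewrite !mxE => cAj.
  apply/eqP; rewrite !expsum_image_word -subr_eq0 -sumrB; apply/eqP.
  by rewrite -[RHS]cAj; apply: eq_bigr => i _; rewrite kE !mxE mulrBl.
have /f_inj gens_eq : raag_eq e (hom_word f (gens_word (fun i => (k i).1)))
                                (hom_word f (gens_word (fun i => (k i).2))).
  apply: req_trans (req_hom_gens_word _) (req_trans image_eq _).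
  exact/req_sym/req_hom_gens_word.
move/negP: c_neq0; apply; apply/eqP/rowP => i.
by have := expsum_req i gens_eq; rewrite !expsum_gens_word mxE kE => ->; rewrite subrr.
Qed.

End InjectiveFromKn.

Lemma clique_full_embedding (T : eqType) (e : rel T) n C :
  irreflexive e -> uniq C -> clique e C -> (n <= size C)%N ->
  exists iota : 'I_n -> T, full_embedding (@Kn_rel n) e iota /\ forall i, iota i \in C.
Proof.
move=> e_irr uC clC le_n_C.
have tnth_inj : injective (tnth (in_tuple C)) by apply/tuple_uniqP.
have iota_inj : injective (fun i => tnth (in_tuple C) (widen_ord le_n_C i)).
  by move=> i j /tnth_inj /(congr1 val) /= /val_inj.
exists (fun i => tnth (in_tuple C) (widen_ord le_n_C i)).
split; last by move=> i; apply: mem_tnth.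
split=> // i j; rewrite /Kn_rel; have [->|ij] := eqVneq i j; first exact: e_irr.
by apply: clC; rewrite ?mem_tnth // (inj_eq iota_inj).
Qed.

Theorem lemma3p4 (T : finType) (e : rel T) (n : nat) (f : 'I_n -> word T) :
  symmetric e -> irreflexive e ->
  is_raag_hom (@Kn_rel n) e f ->
  raag_hom_injective (@Kn_rel n) e f ->
  cond_KK e f ->
  exists iota : 'I_n -> T,
    full_embedding (@Kn_rel n) e iota /\ (forall i, in_supp_hom e f (iota i)).
Proof.
move=> e_sym e_irr f_hom f_inj f_KK.
have /fin_all_exists [g fg] := fun i => exists_shortest e (f i).
have g_supp i v : v \in map fst (g i) -> in_supp e (f i) v.
  by move=> vi; exists (g i); case: (fg i).
have g_clique i : clique e (map fst (g i)).
  by move=> u v ui vi; apply: f_KK (g_supp i u ui) (g_supp i v vi).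
set C := undup (flatten [seq map fst (g i) | i <- enum 'I_n]).
have C_supp v : v \in C -> exists i, v \in map fst (g i).
  by rewrite mem_undup => /flattenP [_ /mapP [i _ ->] vi]; exists i.
have gC i : all (fun l => l.1 \in C) (g i).
  apply/allP => l li; rewrite mem_undup; apply/flattenP.
  by exists (map fst (g i)); [apply: map_f; rewrite mem_enum | apply: map_f].
have clC : clique e C.
  move=> u v /C_supp [i ui] /C_supp [j vj]; have [ij|ij] := eqVneq i j.
    by rewrite ij in ui; apply: (g_clique j).
  apply: (commuting_shortest_adjacent e_sym e_irr (fg i).2 (fg j).2) => //.
  apply: req_trans (req_cat (req_sym (fg i).1) (req_sym (fg j).1)) _.
  exact: req_trans (f_hom i j ij) (req_cat (fg j).1 (fg i).1).
have le_n_C :=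
  raag_hom_injective_Kn_size_le (fun i => (fg i).1) (undup_uniq _) clC gC f_inj.
have [iota [iota_full iotaC]] := clique_full_embedding e_irr (undup_uniq _) clC le_n_C.
exists iota; split=> // i.
by have [j vj] := C_supp _ (iotaC i); exists j; apply: g_supp.
Qed.
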